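(* Let $0<\gamma<1$, $\lambda\ge0$, $\tau>0$, $\eta\in\mathbb{R}$, $J=\sqrt{-1}$, and let $\rho,u$ be real with $\rho u\ge0$. Define $l_0^{(2)}=l_0^{2,\gamma}-\left(\sum_{l=1}^{2}\frac1l(1-e^{-\lambda\tau})^l\right)^{\gamma}$ and $l_k^{(2)}=e^{-(\lambda+\rho u)k\tau}l_k^{2,\gamma}$ for $k\ge1$. Then for every positive integer $N$ and every $(v^0,v^1,\dots,v^N)\in\mathbb{C}^{N+1}$, $$\Re\left\{\sum_{n=0}^{N}\left(\sum_{k=0}^{n}l_k^{(2)}e^{-J\eta u k\tau}v^{n-k}\right)\overline{v^n}\right\}\ge0.$$
   Context: The coefficients $l_k^{2,\gamma}$ are defined by $\left((1-\zeta)+\tfrac12(1-\zeta)^2\right)^{\gamma}=\sum_{k=0}^\infty l_k^{2,\gamma}\zeta^k$; equivalently $l_m^{2,\gamma}=(3/2)^{\gamma}\sum_{k=0}^{m}3^{-k}g_k^\gamma g_{m-k}^\gamma$ with $g_k^\gamma=(-1)^k\binom{\gamma}{k}$. (In the paper $u=U(x_i)$ is the value of a potential at a grid point.) *)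

From Stdlib Require Import Reals.
From Coquelicot Require Import Coquelicot.
Open Scope R_scope.

(* real power x^y for x >= 0, with the convention 0^y = 0 (y > 0) *)
Definition rpow (x y : R) : R := if Req_EM_T x 0 then 0 else Rpower x y.

Fixpoint gbinom (g : R) (k : nat) : R :=
  match k with
  | O => 1
  | S k' => gbinom g k' * (g - INR k') / INR (S k')
  end.

Definition gcoef (g : R) (k : nat) : R := (-1) ^ k * gbinom g k.

Definition l2coef (g : R) (m : nat) : R :=
  rpow (3/2) g * sum_f_R0 (fun k => / 3 ^ k * gcoef g k * gcoef g (m - k)) m.

Definition l2mod (g lam tau rho u : R) (k : nat) : R :=
  match k with
  | O => l2coef g 0 -
         rpow (sum_f_R0 (fun i => / INR (S i) * (1 - exp (- lam * tau)) ^ (S i)) 1) g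
  | S _ => exp (- (lam + rho * u) * INR k * tau) * l2coef g k
  end.

Definition cexpmJ (theta : R) : C := (cos theta, - sin theta).

From Stdlib Require Import Reals Lra Lia.
From Coquelicot Require Import Coquelicot.
Open Scope R_scope.

(* The sum is a lower-triangular Toeplitz form [sum_n sum_(k<=n) c_k v_(n-k) conj v_n] whose
   symbol is
     [sum_k c_k e^(J k th) = (3/2)^g (1 - w)^g (1 - w/3)^g - C0],  [w = s e^(J (th - eta u tau))],
   with [s = e^(-(lam + rho u) tau)], [x = e^(-lam tau)] and [C0 = ((1 - x)(3 - x)/2)^g].
   Sampling the truncated symbol at [K + N + 1] roots of unity writes the form exactly as an
   average of [Re (symbol K th) * |sum_m v_m e^(J m th)|^2], so the form is at least
   [- eps_K * sum_n |v_n|^2] as soon as the symbol's real part is at least [- eps_K].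
   For [s < 1] both binomial series converge with error [O(K^2 s^K)] (via the ODE solved by
   [(1 - t w)^g]), and the real part of the limit is at least [((1 - s)(3 - s)/2)^g >= C0]:
   the two principal arguments add up to some [a] with [|a| < PI/2], and
   [cos (g a) >= (cos a)^g].  Letting [K -> oo] gives the claim for [s < 1]; the case
   [s = 1] (where [C0 = 0]) follows by continuity in [s]. *)

(** * Finite sums of complex numbers *)

(* [sum_n] returns an element of Coquelicot's [AbelianMonoid] carrier, which [ring] does not
   recognise as [C] until the equation is retyped. *)
Ltac C_ring := match goal with |- @eq _ ?x ?y => change (@eq C x y); ring end.

Lemma Cminus_Cplus_l (a b : C) : Cminus (Cplus a b) a = b.
Proof. ring. Qed.

Lemma Re_RtoC_mult r z : Re (Cmult (RtoC r) z) = r * Re z.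
Proof. destruct z; unfold Re; simpl; ring. Qed.

Lemma sum_n_SC (a : nat -> C) N : sum_n a (S N) = Cplus (sum_n a N) (a (S N)).
Proof. exact (@sum_Sn C_AbelianMonoid a N). Qed.

Lemma sum_n_Cplus (a b : nat -> C) N :
  sum_n (fun k => Cplus (a k) (b k)) N = Cplus (sum_n a N) (sum_n b N).
Proof. exact (@sum_n_plus C_AbelianMonoid a b N). Qed.

Lemma sum_n_Cmult_l (c : C) (a : nat -> C) N :
  sum_n (fun k => Cmult c (a k)) N = Cmult c (sum_n a N).
Proof. exact (@sum_n_mult_l C_Ring c a N). Qed.

Lemma sum_n_Cmult_r (c : C) (a : nat -> C) N :
  sum_n (fun k => Cmult (a k) c) N = Cmult (sum_n a N) c.
Proof. exact (@sum_n_mult_r C_Ring c a N). Qed.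

Lemma sum_n_Cminus (a b : nat -> C) N :
  sum_n (fun k => Cminus (a k) (b k)) N = Cminus (sum_n a N) (sum_n b N).
Proof.
  induction N as [|N IH]; [rewrite !sum_O; reflexivity|].
  rewrite !sum_n_SC, IH. C_ring.
Qed.

Lemma sum_n_Cconj (a : nat -> C) N : Cconj (sum_n a N) = sum_n (fun k => Cconj (a k)) N.
Proof.
  induction N as [|N IH]; [rewrite !sum_O; reflexivity|].
  rewrite !sum_n_SC, Cplus_conj, IH. reflexivity.
Qed.

Lemma sum_n_RtoC (a : nat -> R) N : RtoC (sum_n a N) = sum_n (fun k => RtoC (a k)) N.
Proof.
  induction N as [|N IH]; [rewrite !sum_O; reflexivity|].
  rewrite sum_Sn, sum_n_SC, <- IH. apply RtoC_plus.
Qed.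

Lemma Re_sum_n (a : nat -> C) N : Re (sum_n a N) = sum_n (fun k => Re (a k)) N.
Proof.
  induction N as [|N IH]; [rewrite !sum_O; reflexivity|].
  rewrite sum_n_SC, sum_Sn, <- IH. reflexivity.
Qed.

Lemma sum_n_zero_loc (a : nat -> C) N :
  (forall n, (n <= N)%nat -> a n = RtoC 0) -> sum_n a N = RtoC 0.
Proof.
  induction N as [|N IH]; intros H; [rewrite sum_O; auto|].
  rewrite sum_n_SC, IH, H by auto. C_ring.
Qed.

Lemma Cmod_sum_n (a : nat -> C) N : Cmod (sum_n a N) <= sum_n (fun k => Cmod (a k)) N.
Proof. exact (@norm_sum_n_m _ C_NormedModule a 0 N). Qed.

Lemma sum_n_le_loc (a b : nat -> R) N :
  (forall n, (n <= N)%nat -> a n <= b n) -> sum_n a N <= sum_n b N.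
Proof.
  intros H. rewrite !sum_n_Reals. apply sum_Rle. exact H.
Qed.

Lemma sum_n_nonneg_loc (a : nat -> R) N : (forall n, (n <= N)%nat -> 0 <= a n) -> 0 <= sum_n a N.
Proof.
  intros H. apply Rle_trans with (sum_n (fun _ => 0) N).
  - rewrite sum_n_const. lra.
  - exact (sum_n_le_loc _ _ N H).
Qed.

Lemma sum_n_Rmult_l (a : R) (u : nat -> R) N : sum_n (fun k => a * u k) N = a * sum_n u N.
Proof. exact (@sum_n_mult_l R_Ring a u N). Qed.

Lemma sum_n_delta (f : nat -> C) q N :
  sum_n (fun m => if Nat.eqb m q then f m else RtoC 0) N = if Nat.leb q N then f q else RtoC 0.
Proof.
  induction N as [|N IH].
  - rewrite sum_O. destruct q; reflexivity.
  - rewrite sum_n_SC, IH.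
    destruct (Nat.eqb_spec (S N) q), (Nat.leb_spec q N), (Nat.leb_spec q (S N));
      try lia; subst; rewrite ?Cplus_0_r, ?Cplus_0_l; reflexivity.
Qed.

Lemma sum_n_split (a : nat -> C) n K : (n <= K)%nat ->
  sum_n a K = Cplus (sum_n a n) (sum_n (fun i => if Nat.ltb n i then a i else RtoC 0) K).
Proof.
  induction K as [|K IH]; intros H.
  - replace n with 0%nat by lia. rewrite !sum_O. simpl. C_ring.
  - destruct (Nat.eq_dec n (S K)) as [->|Hn].
    + rewrite (sum_n_zero_loc (fun i => if Nat.ltb (S K) i then a i else RtoC 0)),
        Cplus_0_r; [reflexivity|].
      intros m Hm. destruct (Nat.ltb_spec (S K) m); [lia|reflexivity].
    + rewrite sum_n_SC, IH, (sum_n_SC (fun i => if Nat.ltb n i then a i else RtoC 0)) by lia.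
      destruct (Nat.ltb_spec n (S K)); [|lia]. symmetry; apply Cplus_assoc.
Qed.

Lemma sum_n_truncate (f : nat -> C) n K : (n <= K)%nat ->
  sum_n (fun k => if Nat.leb k n then f k else RtoC 0) K = sum_n f n.
Proof.
  intros H. rewrite (sum_n_split _ n K H).
  rewrite (sum_n_zero_loc (fun i => if Nat.ltb n i then _ else RtoC 0)), Cplus_0_r.
  - apply sum_n_ext_loc => k Hk. destruct (Nat.leb_spec k n); [reflexivity|lia].
  - intros m _. destruct (Nat.ltb_spec n m), (Nat.leb_spec m n); try reflexivity; lia.
Qed.

Lemma sum_n_triangle (f : nat -> nat -> C) K :
  sum_n (fun m => sum_n (fun k => f k (m - k)%nat) m) K =
  sum_n (fun j => sum_n (fun i => f j i) (K - j)) K.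
Proof.
  induction K as [|K IH]; [rewrite !sum_O; reflexivity|].
  rewrite sum_n_SC, IH, (sum_n_SC (fun j => sum_n (fun i => f j i) (S K - j))).
  rewrite (sum_n_ext_loc (fun j => sum_n (fun i => f j i) (S K - j))
     (fun j => Cplus (sum_n (fun i => f j i) (K - j)) (f j (S K - j)%nat))).
  - rewrite sum_n_Cplus, sum_n_SC, Nat.sub_diag, sum_O. C_ring.
  - intros n Hn. replace (S K - n)%nat with (S (K - n)) by lia. rewrite sum_n_SC.
    repeat f_equal; lia.
Qed.

(** * Principal powers and their derivatives *)

Definition ce (a : R) : C := (cos a, sin a).

Lemma ce_0 : ce 0 = 1.
Proof. unfold ce. rewrite cos_0, sin_0. reflexivity. Qed.

Lemma ce_add a b : ce (a + b) = Cmult (ce a) (ce b).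
Proof.
  unfold ce, Cmult; simpl. rewrite cos_plus, sin_plus.
  apply injective_projections; simpl; ring.
Qed.

Lemma Cconj_ce a : Cconj (ce a) = ce (- a).
Proof. unfold ce, Cconj; simpl. rewrite cos_neg, sin_neg. reflexivity. Qed.

Lemma Cpow_ce a j : Cpow (ce a) j = ce (INR j * a).
Proof.
  induction j as [|j IH].
  - simpl. rewrite Rmult_0_l, ce_0. reflexivity.
  - rewrite Cpow_S, IH, S_INR, <- ce_add. f_equal. ring.
Qed.

Lemma Cmod_ce a : Cmod (ce a) = 1.
Proof.
  unfold ce, Cmod; simpl. pose proof (sin2_cos2 a). unfold Rsqr in *.
  replace (cos a * (cos a * 1) + sin a * (sin a * 1)) with 1 by lra. apply sqrt_1.
Qed.

Lemma ce_2PI_INR (p : nat) : ce (2 * PI * INR p) = 1.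
Proof.
  unfold ce. replace (2 * PI * INR p) with (0 + 2 * INR p * PI) by ring.
  rewrite cos_period, sin_period, cos_0, sin_0. reflexivity.
Qed.

Definition argp (z : C) : R := atan (Im z / Re z).

(* The principal power [z ^ g]; [argp z] is the principal argument only when [0 < Re z]. *)
Definition cpowp (z : C) (g : R) : C := Cmult (RtoC (Rpower (Cmod z) g)) (ce (g * argp z)).

Lemma Cmod_cpowp z g : Cmod (cpowp z g) = Rpower (Cmod z) g.
Proof.
  unfold cpowp. rewrite Cmod_mult, Cmod_ce, Cmod_R, Rmult_1_r.
  apply Rabs_right. left. apply exp_pos.
Qed.

Lemma cpowp_1 g : cpowp 1 g = 1.
Proof.
  unfold cpowp, argp, Rpower. rewrite Cmod_1, ln_1, Rmult_0_r, exp_0.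
  replace (Im 1 / Re 1) with 0 by (simpl; field). rewrite atan_0, Rmult_0_r, ce_0.
  apply Cmult_1_l.
Qed.

Lemma cpowp_opp_mult z g : Cmult (cpowp z (- g)) (cpowp z g) = 1.
Proof.
  unfold cpowp.
  replace (Cmult (Cmult (RtoC (Rpower (Cmod z) (- g))) (ce (- g * argp z)))
                 (Cmult (RtoC (Rpower (Cmod z) g)) (ce (g * argp z))))
    with (Cmult (RtoC (Rpower (Cmod z) (- g + g))) (ce (- g * argp z + g * argp z)))
    by (rewrite Rpower_plus, ce_add, RtoC_mult; ring).
  replace (- g + g) with 0 by ring. replace (- g * argp z + g * argp z) with 0 by ring.
  unfold Rpower. rewrite Rmult_0_l, exp_0, ce_0. apply Cmult_1_l.
Qed.

Lemma argp_bound z : - (PI / 2) < argp z < PI / 2.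
Proof. pose proof (atan_bound (Im z / Re z)). unfold argp. lra. Qed.

Lemma polar_argp z : 0 < Re z -> z = Cmult (RtoC (Cmod z)) (ce (argp z)).
Proof.
  destruct z as [x y]. unfold argp, ce, Cmod; simpl. intros Hx.
  assert (HS : 0 < sqrt (x ^ 2 + y ^ 2)) by (apply sqrt_lt_R0; nra).
  assert (HSS : sqrt (x ^ 2 + y ^ 2) * sqrt (x ^ 2 + y ^ 2) = x ^ 2 + y ^ 2)
    by (apply sqrt_sqrt; nra).
  assert (E : sqrt (1 + (y / x)²) = sqrt (x ^ 2 + y ^ 2) / x).
  { apply sqrt_lem_1.
    - pose proof (Rle_0_sqr (y / x)). lra.
    - left; apply Rdiv_lt_0_compat; auto.
    - unfold Rsqr. replace (sqrt (x ^ 2 + y ^ 2) / x * (sqrt (x ^ 2 + y ^ 2) / x))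
        with (sqrt (x ^ 2 + y ^ 2) * sqrt (x ^ 2 + y ^ 2) / (x * x)) by (field; lra).
      rewrite HSS. field. lra. }
  rewrite cos_atan, sin_atan, E.
  apply injective_projections; simpl;
    replace (x * (x * 1) + y * (y * 1)) with (x ^ 2 + y ^ 2) by ring; field; lra.
Qed.

Lemma Cmod_pos_of_Re z : 0 < Re z -> 0 < Cmod z.
Proof. intros H. pose proof (re_le_Cmod z). pose proof (Rle_abs (Re z)). lra. Qed.

Lemma cpowp_mult z1 z2 g : 0 < Re z1 -> 0 < Re z2 ->
  Cmult (cpowp z1 g) (cpowp z2 g) =
  Cmult (RtoC (Rpower (Cmod z1 * Cmod z2) g)) (ce (g * (argp z1 + argp z2))).
Proof.
  intros H1 H2. unfold cpowp.
  pose proof (Cmod_pos_of_Re z1 H1). pose proof (Cmod_pos_of_Re z2 H2).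
  rewrite <- Rpower_mult_distr, Rmult_plus_distr_l, ce_add, RtoC_mult by assumption. ring.
Qed.

Definition cderive (f : R -> C) (t : R) (l : C) :=
  is_derive (fun s => Re (f s)) t (Re l) /\ is_derive (fun s => Im (f s)) t (Im l).

Lemma cderive_ext f g t l : (forall s, f s = g s) -> cderive f t l -> cderive g t l.
Proof.
  intros E [H1 H2]; split; eapply is_derive_ext; try eassumption;
    intro s; cbv beta; rewrite E; reflexivity.
Qed.

Lemma cderive_eq f t l l' : cderive f t l -> l = l' -> cderive f t l'.
Proof. intros H ->; exact H. Qed.

Lemma cderive_const (c : C) t : cderive (fun _ => c) t 0.
Proof. split; apply is_derive_Reals, derivable_pt_lim_const. Qed.

Lemma cderive_plus f g t a b : cderive f t a -> cderive g t b ->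
  cderive (fun s => Cplus (f s) (g s)) t (Cplus a b).
Proof.
  intros [H1 H2] [H3 H4]; split.
  - exact (is_derive_plus (fun s => Re (f s)) (fun s => Re (g s)) t _ _ H1 H3).
  - exact (is_derive_plus (fun s => Im (f s)) (fun s => Im (g s)) t _ _ H2 H4).
Qed.

Lemma cderive_mult f g t a b : cderive f t a -> cderive g t b ->
  cderive (fun s => Cmult (f s) (g s)) t (Cplus (Cmult a (g t)) (Cmult (f t) b)).
Proof.
  intros [H1 H2] [H3 H4].
  assert (Hm : forall u v du dv, is_derive u t du -> is_derive v t dv ->
            is_derive (fun s => u s * v s) t (du * v t + u t * dv)).
  { intros u v du dv Hu Hv. exact (is_derive_mult u v t du dv Hu Hv (fun x y => Rmult_comm x y)). }
  split.
  - replace (Re (Cplus (Cmult a (g t)) (Cmult (f t) b)))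
      with ((Re a * Re (g t) + Re (f t) * Re b) - (Im a * Im (g t) + Im (f t) * Im b))
      by (destruct a, b; unfold Re, Im; simpl; ring).
    exact (is_derive_minus _ _ t _ _ (Hm _ _ _ _ H1 H3) (Hm _ _ _ _ H2 H4)).
  - replace (Im (Cplus (Cmult a (g t)) (Cmult (f t) b)))
      with ((Re a * Im (g t) + Re (f t) * Im b) + (Im a * Re (g t) + Im (f t) * Re b))
      by (destruct a, b; unfold Re, Im; simpl; ring).
    exact (is_derive_plus _ _ t _ _ (Hm _ _ _ _ H1 H4) (Hm _ _ _ _ H2 H3)).
Qed.

Lemma cderive_RtoC (f : R -> R) t l : is_derive f t l -> cderive (fun s => RtoC (f s)) t (RtoC l).
Proof. intros H; split; [exact H|apply is_derive_Reals, derivable_pt_lim_const]. Qed.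

Lemma cderive_sum_n (f : nat -> R -> C) (d : nat -> C) t K :
  (forall k, (k <= K)%nat -> cderive (f k) t (d k)) ->
  cderive (fun s => sum_n (fun k => f k s) K) t (sum_n d K).
Proof.
  induction K as [|K IH]; intros H.
  - rewrite sum_O. apply (cderive_ext (f 0%nat)); [intro; rewrite sum_O; reflexivity|auto].
  - rewrite sum_n_SC.
    apply (cderive_ext (fun s => Cplus (sum_n (fun k => f k s) K) (f (S K) s))).
    + intro; rewrite sum_n_SC; reflexivity.
    + apply cderive_plus; auto.
Qed.

Lemma Cmod_sub_le_cderive (f f' : R -> C) B :
  (forall s, 0 <= s <= 1 -> cderive f s (f' s)) ->
  (forall s, 0 <= s <= 1 -> Cmod (f' s) <= B) ->
  Cmod (Cminus (f 1) (f 0)) <= sqrt 2 * B.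
Proof.
  intros Hd Hb.
  destruct (MVT_cor3 (fun s => Re (f s)) (fun s => Re (f' s)) 0 1 Rlt_0_1)
    as [c1 [Hc1 [Hc1' E1]]].
  { intros x Hx Hx'. apply is_derive_Reals, (proj1 (Hd x (conj Hx Hx'))). }
  destruct (MVT_cor3 (fun s => Im (f s)) (fun s => Im (f' s)) 0 1 Rlt_0_1)
    as [c2 [Hc2 [Hc2' E2]]].
  { intros x Hx Hx'. apply is_derive_Reals, (proj2 (Hd x (conj Hx Hx'))). }
  pose proof (Hb c1 (conj Hc1 Hc1')). pose proof (Hb c2 (conj Hc2 Hc2')).
  eapply Rle_trans; [apply Cmod_2Rmax|]. apply Rmult_le_compat_l; [apply sqrt_pos|].
  apply Rmax_lub.
  - replace (fst (Cminus (f 1) (f 0))) with (Re (f' c1)) by (unfold Re in *; simpl; lra).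
    eapply Rle_trans; [apply re_le_Cmod|assumption].
  - replace (snd (Cminus (f 1) (f 0))) with (Im (f' c2)) by (unfold Im in *; simpl; lra).
    eapply Rle_trans; [|eassumption]. eapply Rle_trans; [apply Rmax_r|apply Rmax_Cmod].
Qed.

Lemma ln_Cmod z : ln (Cmod z) = ln (Re z ^ 2 + Im z ^ 2) / 2.
Proof.
  unfold Cmod, Re, Im. set (m := fst z ^ 2 + snd z ^ 2).
  destruct (Rlt_dec 0 m) as [Hm|Hm].
  - rewrite <- (sqrt_sqrt m) at 2 by lra.
    rewrite ln_mult by (apply sqrt_lt_R0; lra). field.
  - assert (E : m = 0) by (unfold m in *; nra).
    rewrite E, sqrt_0. unfold ln.
    destruct (Rlt_dec 0 0) as [H0|_]; [destruct (Rlt_irrefl 0 H0)|field].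
Qed.

Lemma cderive_cpowp_1m g w t : let z s := Cminus 1 (Cmult (RtoC s) w) in
  0 < Re (z t) ->
  cderive (fun s => cpowp (z s) g) t (Cmult (cpowp (z t) g) (Cmult (RtoC (- g)) (Cdiv w (z t)))).
Proof.
  intros z Hp.
  apply (cderive_ext (fun s => Cmult (RtoC (exp (g * (ln (Re (z s) ^ 2 + Im (z s) ^ 2) / 2))))
                                     (ce (g * atan (Im (z s) / Re (z s)))))).
  { intro s. unfold cpowp, argp, Rpower. rewrite ln_Cmod. reflexivity. }
  unfold cpowp, argp, Rpower. rewrite ln_Cmod.
  revert Hp. unfold z, cderive, ce, Re, Im. destruct w as [a b]. simpl. intros Hp.
  assert (0 < (1 + - (t * a - 0 * b)) * ((1 + - (t * a - 0 * b)) * 1) +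
              (0 + - (t * b + 0 * a)) * ((0 + - (t * b + 0 * a)) * 1)) by nra.
  split.
  - auto_derive.
    + repeat split; try nra; lra.
    + unfold Cinv, Cminus, Cmult, Copp, Cplus; simpl.
      set (E := exp _). set (c := cos _). set (s := sin _).
      field. repeat split; try nra; try lra.
  - auto_derive.
    + repeat split; try nra; lra.
    + unfold Cinv, Cminus, Cmult, Copp, Cplus; simpl.
      set (E := exp _). set (c := cos _). set (s := sin _).
      field. repeat split; try nra; try lra.
Qed.

(** * Truncated binomial series *)

Lemma gcoef_0 g : gcoef g 0 = 1.
Proof. unfold gcoef; simpl; ring. Qed.

Lemma gcoef_S g k : gcoef g (S k) = gcoef g k * (INR k - g) / INR (S k).
Proof.
  unfold gcoef. change (gbinom g (S k)) with (gbinom g k * (g - INR k) / INR (S k)).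
  change ((-1) ^ S k) with (-1 * (-1) ^ k).
  assert (INR (S k) <> 0) by (apply not_0_INR; lia).
  field; auto.
Qed.

Lemma Rabs_gcoef_le1 g k : -1 <= g <= 1 -> Rabs (gcoef g k) <= 1.
Proof.
  intros Hg. induction k as [|k IH].
  - rewrite gcoef_0, Rabs_R1; lra.
  - rewrite gcoef_S, S_INR. pose proof (pos_INR k).
    unfold Rdiv. rewrite !Rabs_mult, Rabs_inv, (Rabs_right (INR k + 1)) by lra.
    assert (Rabs (INR k - g) <= INR k + 1) by (apply Rabs_le; lra).
    assert (Rabs (INR k - g) * / (INR k + 1) <= 1).
    { apply (Rmult_le_reg_r (INR k + 1)); [lra|].
      rewrite Rmult_assoc, Rinv_l by lra. lra. }
    pose proof (Rabs_pos (gcoef g k)).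
    rewrite Rmult_assoc. apply Rle_trans with (1 * 1); [|lra].
    apply Rmult_le_compat; try lra.
    apply Rmult_le_pos; [apply Rabs_pos|left; apply Rinv_0_lt_compat; lra].
Qed.

Definition binom_psum g (z : C) K : C := sum_n (fun k => Cmult (RtoC (gcoef g k)) (Cpow z k)) K.

Definition binom_psum_dt g (w : C) (t : R) K : C :=
  sum_n (fun k => Cmult (Cmult (RtoC (INR k * gcoef g k)) (Cpow (RtoC t) (k - 1))) (Cpow w k)) K.

Lemma binom_psum_scal g w t K :
  binom_psum g (Cmult (RtoC t) w) K =
  sum_n (fun k => Cmult (Cmult (RtoC (gcoef g k)) (Cpow (RtoC t) k)) (Cpow w k)) K.
Proof. apply sum_n_ext => k. rewrite Cpow_mult_l. C_ring. Qed.

Lemma binom_psum_0 g K : binom_psum g 0 K = 1.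
Proof.
  unfold binom_psum. induction K as [|K IH].
  - rewrite sum_O. simpl. rewrite gcoef_0. C_ring.
  - rewrite sum_n_SC, IH. simpl. C_ring.
Qed.

Lemma cderive_binom_psum g w t K :
  cderive (fun s => binom_psum g (Cmult (RtoC s) w) K) t (binom_psum_dt g w t K).
Proof.
  apply (cderive_ext (fun s => sum_n (fun k =>
    Cmult (RtoC (gcoef g k * s ^ k)) (Cpow w k)) K)).
  { intro s. rewrite binom_psum_scal. apply sum_n_ext => k. rewrite RtoC_mult, RtoC_pow. C_ring. }
  apply cderive_sum_n. intros k _. eapply cderive_eq.
  - apply cderive_mult; [|apply cderive_const].
    apply cderive_RtoC, is_derive_scal, is_derive_pow, is_derive_id.
  - replace (Init.Nat.pred k) with (k - 1)%nat by lia.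
    change (one : R) with 1. rewrite <- RtoC_pow, !RtoC_mult. ring.
Qed.

Definition binom_residual g (w : C) (t : R) K : C :=
  Cmult (Cmult (Copp (RtoC (INR (S K) * gcoef g (S K)))) (Cpow w (S K))) (Cpow (RtoC t) K).

(* [t |-> (1 - t w) ^ g] solves [(1 - t w) f' + g w f = 0]; its truncated series misses by
   the single top-order term [binom_residual]. *)
Lemma binom_psum_residual g w t K :
  Cplus (Cmult (Cminus 1 (Cmult (RtoC t) w)) (binom_psum_dt g w t K))
        (Cmult (Cmult (RtoC g) w) (binom_psum g (Cmult (RtoC t) w) K))
  = binom_residual g w t K.
Proof.
  rewrite binom_psum_scal. unfold binom_psum_dt, binom_residual.
  induction K as [|K IH].
  - rewrite !sum_O, gcoef_S, gcoef_0. simpl. apply injective_projections; simpl; field.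
  - rewrite !sum_n_SC. replace (S K - 1)%nat with K by lia.
    transitivity (Cplus (Cmult (Cmult (Copp (RtoC (INR (S K) * gcoef g (S K)))) (Cpow w (S K)))
                               (Cpow (RtoC t) K))
       (Cplus (Cmult (Cminus 1 (Cmult (RtoC t) w))
                     (Cmult (Cmult (RtoC (INR (S K) * gcoef g (S K))) (Cpow (RtoC t) K))
                            (Cpow w (S K))))
              (Cmult (Cmult (RtoC g) w)
                     (Cmult (Cmult (RtoC (gcoef g (S K))) (Cpow (RtoC t) (S K)))
                            (Cpow w (S K)))))).
    { rewrite <- IH. ring. }
    rewrite (gcoef_S g (S K)). set (G := gcoef g (S K)). rewrite !S_INR, !Cpow_S.
    assert (INR K + 1 + 1 <> 0) by (pose proof (pos_INR K); lra).
    replace ((INR K + 1 + 1) * (G * (INR K + 1 - g) / (INR K + 1 + 1)))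
      with (G * (INR K + 1 - g)) by (field; auto).
    repeat (rewrite RtoC_mult || rewrite RtoC_plus || rewrite RtoC_minus || rewrite RtoC_opp).
    ring.
Qed.

Lemma Cmod_binom_residual_le g w t K : -1 <= g <= 1 -> 0 <= t <= 1 ->
  Cmod (binom_residual g w t K) <= INR (S K) * Cmod w ^ S K.
Proof.
  intros Hg Ht. unfold binom_residual.
  rewrite !Cmod_mult, Cmod_opp, !Cmod_pow, !Cmod_R, Rabs_mult, (Rabs_right t) by lra.
  rewrite (Rabs_right (INR (S K))) by (apply Rle_ge, pos_INR).
  pose proof (Rabs_gcoef_le1 g (S K) Hg). pose proof (Rabs_pos (gcoef g (S K))).
  pose proof (pos_INR (S K)). pose proof (pow_le (Cmod w) (S K) (Cmod_ge_0 w)).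
  assert (t ^ K <= 1) by (rewrite <- (pow1 K); apply pow_incr; lra).
  assert (0 <= t ^ K) by (apply pow_le; lra).
  assert (Rabs (gcoef g (S K)) * t ^ K <= 1) by nra.
  assert (0 <= Rabs (gcoef g (S K)) * t ^ K) by nra.
  transitivity (INR (S K) * Cmod w ^ S K * (Rabs (gcoef g (S K)) * t ^ K)); [right; ring|].
  rewrite <- Rmult_1_r. apply Rmult_le_compat_l; nra.
Qed.

Lemma Cmod_1m_ge w t : 0 <= t -> 1 - t * Cmod w <= Cmod (Cminus 1 (Cmult (RtoC t) w)).
Proof.
  intros Ht.
  pose proof (Cmod_triangle (Cminus 1 (Cmult (RtoC t) w)) (Cmult (RtoC t) w)) as H.
  replace (Cplus (Cminus 1 (Cmult (RtoC t) w)) (Cmult (RtoC t) w)) with (RtoC 1) in H by ring.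
  rewrite Cmod_1, Cmod_mult, Cmod_R, Rabs_right in H by lra. lra.
Qed.

Lemma Re_1m_ge w t : 0 <= t -> 1 - t * Cmod w <= Re (Cminus 1 (Cmult (RtoC t) w)).
Proof.
  intros Ht. pose proof (re_le_Cmod w). pose proof (Rle_abs (Re w)).
  assert (t * Re w <= t * Cmod w) by (apply Rmult_le_compat_l; lra).
  destruct w as [a b]. unfold Re in *. simpl in *. lra.
Qed.

Lemma Rpower_opp_le_compat a b g : 0 <= g -> 0 < a <= b -> Rpower b (- g) <= Rpower a (- g).
Proof.
  intros Hg Hab. unfold Rpower.
  assert (ln a <= ln b) by (apply ln_le; lra).
  destruct (Rle_lt_or_eq_dec (- g * ln b) (- g * ln a)) as [Hlt|Heq]; [nra| |].
  - left. apply exp_increasing, Hlt.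
  - rewrite Heq. lra.
Qed.

Lemma Cmod_cpowp_1m_le g w : 0 <= g -> Cmod w < 1 -> Cmod (cpowp (Cminus 1 w) g) <= Rpower 2 g.
Proof.
  intros Hg Hw. rewrite Cmod_cpowp. apply Rle_Rpower_l; [exact Hg|split].
  - pose proof (Cmod_1m_ge w 1 Rle_0_1). rewrite Cmult_1_l in H. lra.
  - eapply Rle_trans; [apply Cmod_triangle|]. rewrite Cmod_opp, Cmod_1. lra.
Qed.

Lemma cderive_binom_psum_cpowp g w t K : let z s := Cminus 1 (Cmult (RtoC s) w) in
  0 < Re (z t) ->
  cderive (fun s => Cmult (binom_psum g (Cmult (RtoC s) w) K) (cpowp (z s) (- g))) t
          (Cmult (cpowp (z t) (- g)) (Cdiv (binom_residual g w t K) (z t))).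
Proof.
  intros z Hp.
  assert (Hz : z t <> 0).
  { intros E. rewrite E in Hp. simpl in Hp. lra. }
  eapply cderive_eq.
  - apply cderive_mult; [apply cderive_binom_psum|exact (cderive_cpowp_1m (- g) w t Hp)].
  - rewrite <- binom_psum_residual, Ropp_involutive. fold (z t). field. exact Hz.
Qed.

Lemma Cmod_Re_1m_ge w s u : Cmod w <= s -> 0 <= u <= 1 ->
  1 - s <= Cmod (Cminus 1 (Cmult (RtoC u) w)) /\ 1 - s <= Re (Cminus 1 (Cmult (RtoC u) w)).
Proof.
  intros Hw Hu. pose proof (Cmod_1m_ge w u (proj1 Hu)). pose proof (Re_1m_ge w u (proj1 Hu)).
  assert (u * Cmod w <= s) by (pose proof (Cmod_ge_0 w); nra). lra.
Qed.

Lemma Cmod_cpowp_residual_le g s w u K : 0 <= g <= 1 -> 0 <= s < 1 -> Cmod w <= s ->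
  0 <= u <= 1 -> let z := Cminus 1 (Cmult (RtoC u) w) in
  Cmod (Cmult (cpowp z (- g)) (Cdiv (binom_residual g w u K) z))
  <= Rpower (1 - s) (- g) / (1 - s) * (INR (S K) * s ^ S K).
Proof.
  intros Hg Hs Hw Hu z. destruct (Cmod_Re_1m_ge w s u Hw Hu) as [Hm _]. fold z in Hm.
  assert (Hz0 : z <> 0) by (intros E; rewrite E, Cmod_0 in Hm; lra).
  rewrite Cmod_mult, Cmod_div, Cmod_cpowp by exact Hz0.
  pose proof (Rpower_opp_le_compat (1 - s) (Cmod z) g ltac:(lra) ltac:(lra)).
  pose proof (Cmod_binom_residual_le g w u K ltac:(lra) Hu).
  assert (Cmod w ^ S K <= s ^ S K) by (apply pow_incr; split; [apply Cmod_ge_0|exact Hw]).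
  assert (/ Cmod z <= / (1 - s)) by (apply Rinv_le_contravar; lra).
  assert (0 < / (1 - s)) by (apply Rinv_0_lt_compat; lra).
  pose proof (pos_INR (S K)). pose proof (Cmod_ge_0 (binom_residual g w u K)).
  assert (0 < / Cmod z) by (apply Rinv_0_lt_compat; lra).
  pose proof (exp_pos (- g * ln (Cmod z))).
  unfold Rdiv. rewrite (Rmult_comm (Cmod _) (/ _)), <- Rmult_assoc.
  apply Rmult_le_compat; [|assumption| |nra].
  - apply Rmult_le_pos; unfold Rpower; lra.
  - apply Rmult_le_compat; unfold Rpower in *; lra.
Qed.

(* The ODE turns [Q t = binom_psum g (t w) K * (1 - t w) ^ (- g)] into a function with
   [Q 0 = 1] whose derivative is the small residual; [Q 1 - 1] is the relative error. *)
Lemma Cmod_binom_psum_sub_cpowp g s : 0 <= g <= 1 -> 0 <= s < 1 ->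
  exists B, 0 <= B /\ forall w K, Cmod w <= s ->
    Cmod (Cminus (binom_psum g w K) (cpowp (Cminus 1 w) g)) <= B * (INR (S K) * s ^ S K).
Proof.
  intros Hg Hs.
  exists (sqrt 2 * (Rpower (1 - s) (- g) / (1 - s)) * Rpower 2 g). split.
  { pose proof (sqrt_pos 2). pose proof (exp_pos (- g * ln (1 - s))).
    pose proof (exp_pos (g * ln 2)). assert (0 < / (1 - s)) by (apply Rinv_0_lt_compat; lra).
    unfold Rpower, Rdiv. repeat apply Rmult_le_pos; lra. }
  intros w K Hw.
  set (z u := Cminus 1 (Cmult (RtoC u) w)).
  set (Q u := Cmult (binom_psum g (Cmult (RtoC u) w) K) (cpowp (z u) (- g))).
  assert (HQ : Cmod (Cminus (Q 1) (Q 0)) <=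
               sqrt 2 * (Rpower (1 - s) (- g) / (1 - s) * (INR (S K) * s ^ S K))).
  { apply (Cmod_sub_le_cderive Q
             (fun u => Cmult (cpowp (z u) (- g)) (Cdiv (binom_residual g w u K) (z u)))).
    - intros u Hu. apply cderive_binom_psum_cpowp.
      destruct (Cmod_Re_1m_ge w s u Hw Hu). unfold z. lra.
    - intros u Hu. apply Cmod_cpowp_residual_le; assumption. }
  assert (HQ0 : Q 0 = 1).
  { unfold Q, z. replace (Cmult (RtoC 0) w) with (RtoC 0) by ring.
    replace (Cminus 1 0) with (RtoC 1) by ring. rewrite binom_psum_0, cpowp_1. ring. }
  assert (E : Cminus (binom_psum g w K) (cpowp (Cminus 1 w) g) =
              Cmult (Cminus (Q 1) (Q 0)) (cpowp (Cminus 1 w) g)).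
  { rewrite HQ0. unfold Q, z. rewrite !Cmult_1_l.
    transitivity (Cminus (Cmult (binom_psum g w K)
                                (Cmult (cpowp (Cminus 1 w) (- g)) (cpowp (Cminus 1 w) g)))
                         (cpowp (Cminus 1 w) g)); [rewrite cpowp_opp_mult; ring|ring]. }
  rewrite E, Cmod_mult. pose proof (Cmod_cpowp_1m_le g w (proj1 Hg) ltac:(lra)).
  transitivity (sqrt 2 * (Rpower (1 - s) (- g) / (1 - s) * (INR (S K) * s ^ S K)) * Rpower 2 g).
  - apply Rmult_le_compat; [apply Cmod_ge_0|apply Cmod_ge_0|exact HQ|assumption].
  - right. ring.
Qed.

Lemma Cmod_binom_psum_le g w K : -1 <= g <= 1 -> Cmod w <= 1 ->
  Cmod (binom_psum g w K) <= INR (S K).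
Proof.
  intros Hg Hw. eapply Rle_trans; [apply Cmod_sum_n|].
  rewrite <- (Rmult_1_r (INR (S K))), <- sum_n_const. apply sum_n_le_loc. intros k _.
  rewrite Cmod_mult, Cmod_R, Cmod_pow.
  pose proof (Rabs_gcoef_le1 g k Hg). pose proof (Rabs_pos (gcoef g k)).
  pose proof (pow_le (Cmod w) k (Cmod_ge_0 w)).
  assert (Cmod w ^ k <= 1) by (rewrite <- (pow1 k); apply pow_incr; split; [apply Cmod_ge_0|auto]).
  nra.
Qed.

(** * The generating function of [l2coef] *)

(* [(3/2) ^ g * l2gen g w = ((1 - w) + (1 - w) ^ 2 / 2) ^ g] is the generating function of
   [l2coef g]; [l2psum] truncates the Cauchy product of the two binomial series. *)
Definition l2gen g (w : C) : C :=
  Cmult (cpowp (Cminus 1 w) g) (cpowp (Cminus 1 (Cmult w (RtoC (/ 3)))) g).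

Definition l2psum g (w : C) K : C :=
  sum_n (fun m => Cmult (RtoC (sum_f_R0 (fun k => / 3 ^ k * gcoef g k * gcoef g (m - k)) m))
                        (Cpow w m)) K.

Definition l2term g (w : C) (j i : nat) : C :=
  Cmult (RtoC (/ 3 ^ j * gcoef g j * gcoef g i)) (Cpow w (j + i)).

Lemma l2psum_triangle g w K : l2psum g w K = sum_n (fun j => sum_n (l2term g w j) (K - j)) K.
Proof.
  rewrite <- sum_n_triangle. unfold l2psum. apply sum_n_ext_loc. intros m Hm.
  rewrite <- sum_n_Reals, sum_n_RtoC, <- sum_n_Cmult_r.
  apply sum_n_ext_loc. intros k Hk. unfold l2term. do 2 f_equal. lia.
Qed.

Lemma binom_psum_mult g w K :
  Cmult (binom_psum g (Cmult w (RtoC (/ 3))) K) (binom_psum g w K) =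
  sum_n (fun j => sum_n (l2term g w j) K) K.
Proof.
  unfold binom_psum. rewrite <- sum_n_Cmult_r. apply sum_n_ext => j.
  rewrite <- sum_n_Cmult_l. apply sum_n_ext => i. unfold l2term.
  rewrite Cpow_mult_l, Cpow_add_r, <- RtoC_pow, <- pow_inv, !RtoC_mult. C_ring.
Qed.

Lemma Cmod_l2term_le g w j i : -1 <= g <= 1 -> Cmod (l2term g w j i) <= Cmod w ^ (j + i).
Proof.
  intros Hg. unfold l2term. rewrite Cmod_mult, Cmod_R, Cmod_pow, !Rabs_mult, Rabs_inv.
  rewrite Rabs_right by (apply Rle_ge, pow_le; lra).
  pose proof (Rabs_gcoef_le1 g j Hg). pose proof (Rabs_gcoef_le1 g i Hg).
  pose proof (Rabs_pos (gcoef g j)). pose proof (Rabs_pos (gcoef g i)).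
  assert (1 <= 3 ^ j) by (rewrite <- (pow1 j); apply pow_incr; lra).
  assert (/ 3 ^ j <= 1) by (rewrite <- Rinv_1; apply Rinv_le_contravar; lra).
  assert (0 < / 3 ^ j) by (apply Rinv_0_lt_compat; lra).
  pose proof (pow_le (Cmod w) (j + i) (Cmod_ge_0 w)).
  set (A := / 3 ^ j) in *. set (B := Rabs (gcoef g j)) in *. set (D := Rabs (gcoef g i)) in *.
  assert (A * B <= 1) by nra. assert (0 <= A * B) by nra.
  assert (A * B * D <= 1) by nra. assert (0 <= A * B * D) by nra.
  nra.
Qed.

Lemma Cmod_binom_psum_mult_sub_l2psum g w K : -1 <= g <= 1 -> Cmod w <= 1 ->
  Cmod (Cminus (Cmult (binom_psum g (Cmult w (RtoC (/ 3))) K) (binom_psum g w K)) (l2psum g w K))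
  <= INR (S K) ^ 2 * Cmod w ^ S K.
Proof.
  intros Hg Hw. pose proof (Cmod_ge_0 w).
  rewrite binom_psum_mult, l2psum_triangle, <- sum_n_Cminus.
  eapply Rle_trans; [apply Cmod_sum_n|].
  replace (INR (S K) ^ 2 * Cmod w ^ S K) with (INR (S K) * (INR (S K) * Cmod w ^ S K)) by ring.
  rewrite <- sum_n_const. apply sum_n_le_loc. intros j Hj.
  rewrite (sum_n_split (l2term g w j) (K - j) K) by lia.
  rewrite Cminus_Cplus_l.
  eapply Rle_trans; [apply Cmod_sum_n|].
  rewrite <- sum_n_const. apply sum_n_le_loc. intros i Hi.
  destruct (Nat.ltb_spec (K - j) i).
  - eapply Rle_trans; [apply Cmod_l2term_le; exact Hg|].
    replace (j + i)%nat with (S K + (j + i - S K))%nat by lia. rewrite pow_add.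
    assert (Cmod w ^ (j + i - S K) <= 1) by (rewrite <- (pow1 (j + i - S K)); apply pow_incr; lra).
    pose proof (pow_le (Cmod w) (S K) (Cmod_ge_0 w)). nra.
  - rewrite Cmod_0. apply pow_le. lra.
Qed.

Lemma Cmod_l2psum_sub_l2gen g s : 0 <= g <= 1 -> 0 <= s < 1 ->
  exists B, 0 <= B /\ forall w K, Cmod w <= s ->
    Cmod (Cminus (l2psum g w K) (l2gen g w)) <= B * (INR (S K) ^ 2 * s ^ S K).
Proof.
  unfold l2gen. intros Hg Hs. destruct (Cmod_binom_psum_sub_cpowp g s Hg Hs) as [B1 [HB1 Happrox]].
  exists (1 + B1 + Rpower 2 g * B1). split.
  { pose proof (exp_pos (g * ln 2)). unfold Rpower. nra. }
  intros w K Hw.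
  set (w3 := Cmult w (RtoC (/ 3))).
  assert (Hw3 : Cmod w3 <= s).
  { unfold w3. rewrite Cmod_mult, Cmod_R, Rabs_right by lra. pose proof (Cmod_ge_0 w). lra. }
  set (A := binom_psum g w3 K). set (Bw := binom_psum g w K).
  set (P1 := cpowp (Cminus 1 w) g). set (P3 := cpowp (Cminus 1 w3) g).
  set (n := INR (S K)). set (q := s ^ S K).
  assert (Hn : 1 <= n) by (unfold n; rewrite S_INR; pose proof (pos_INR K); lra).
  assert (Hq : 0 <= q) by (apply pow_le; lra).
  assert (H1 : Cmod (Cminus (Cmult A Bw) (l2psum g w K)) <= n ^ 2 * q).
  { eapply Rle_trans; [apply Cmod_binom_psum_mult_sub_l2psum; lra|].
    apply Rmult_le_compat_l; [nra|]. apply pow_incr. split; [apply Cmod_ge_0|exact Hw]. }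
  pose proof (Happrox w3 K Hw3) as H2. fold A P3 n q in H2.
  pose proof (Happrox w K Hw) as H3. fold Bw P1 n q in H3.
  assert (HB : Cmod Bw <= n) by (apply Cmod_binom_psum_le; lra).
  assert (HP3 : Cmod P3 <= Rpower 2 g) by (apply Cmod_cpowp_1m_le; lra).
  assert (E : Cminus (l2psum g w K) (Cmult P1 P3) =
     Cplus (Copp (Cminus (Cmult A Bw) (l2psum g w K)))
           (Cplus (Cmult (Cminus A P3) Bw) (Cmult P3 (Cminus Bw P1)))) by ring.
  rewrite E. eapply Rle_trans; [apply Cmod_triangle|].
  eapply Rle_trans; [apply Rplus_le_compat_l, Cmod_triangle|].
  rewrite Cmod_opp, !Cmod_mult.
  assert (Hnq : n * q <= n ^ 2 * q).
  { replace (n ^ 2 * q) with (n * (n * q)) by ring.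
    rewrite <- (Rmult_1_l (n * q)) at 1. apply Rmult_le_compat_r; nra. }
  assert (T2 : Cmod (Cminus A P3) * Cmod Bw <= B1 * (n ^ 2 * q)).
  { replace (B1 * (n ^ 2 * q)) with (B1 * (n * q) * n) by ring.
    apply Rmult_le_compat; auto using Cmod_ge_0. }
  assert (T3 : Cmod P3 * Cmod (Cminus Bw P1) <= Rpower 2 g * B1 * (n ^ 2 * q)).
  { rewrite Rmult_assoc. apply Rmult_le_compat; auto using Cmod_ge_0.
    eapply Rle_trans; [exact H3|]. apply Rmult_le_compat_l; assumption. }
  lra.
Qed.

Lemma exp_le_compat x y : x <= y -> exp x <= exp y.
Proof. intros [H|H]; [left; apply exp_increasing, H|right; rewrite H; reflexivity]. Qed.

Lemma tan_le_compat x y : - (PI / 2) < x -> x <= y -> y < PI / 2 -> tan x <= tan y.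
Proof.
  intros Hx [Hxy|Hxy] Hy; [left; apply tan_increasing; lra|right; rewrite Hxy; reflexivity].
Qed.

(* Concavity of [ln cos]: [s |-> g ln (cos s) - ln (cos (g s))] has derivative
   [g (tan (g s) - tan s) <= 0] on [[0, PI/2)]. *)
Lemma Rpower_cos_le_cos_mult g a : 0 <= g <= 1 -> 0 <= a < PI / 2 ->
  Rpower (cos a) g <= cos (g * a).
Proof.
  intros Hg Ha. pose proof PI_RGT_0.
  destruct (Req_dec a 0) as [->|Ha0].
  { rewrite Rmult_0_r, cos_0. unfold Rpower. rewrite ln_1, Rmult_0_r, exp_0. lra. }
  assert (Hc : forall s, 0 <= s <= a -> 0 < cos s /\ 0 < cos (g * s)).
  { intros s Hs. split; apply cos_gt_0; nra. }
  assert (Hd : forall s, 0 <= s -> s <= a ->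
     derivable_pt_lim (fun s => g * ln (cos s) - ln (cos (g * s))) s
        (g * (tan (g * s) - tan s))).
  { intros s H1 H2. destruct (Hc s (conj H1 H2)). apply is_derive_Reals.
    auto_derive; [repeat split; lra|]. unfold tan. field. lra. }
  destruct (MVT_cor3 _ _ 0 a ltac:(lra) Hd) as [c [Hc1 [Hc2 E]]].
  rewrite Rmult_0_r, cos_0, ln_1 in E.
  assert (0 <= g * c) by (apply Rmult_le_pos; lra).
  assert (g * c <= c) by nra.
  assert (tan (g * c) <= tan c) by (apply tan_le_compat; lra).
  assert (Hneg : g * (tan (g * c) - tan c) <= 0) by nra.
  assert (g * (tan (g * c) - tan c) * (a - 0) <= 0) by nra.
  assert (g * ln (cos a) <= ln (cos (g * a))) by lra.
  destruct (Hc a ltac:(lra)).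
  unfold Rpower. rewrite <- (exp_ln (cos (g * a))) by assumption. apply exp_le_compat. assumption.
Qed.

Lemma Rpower_cos_le_cos_mult_abs g a : 0 <= g <= 1 -> - (PI / 2) < a < PI / 2 ->
  Rpower (cos a) g <= cos (g * a).
Proof.
  intros Hg Ha. destruct (Rle_dec 0 a).
  - apply Rpower_cos_le_cos_mult; lra.
  - rewrite <- (cos_neg a), <- (cos_neg (g * a)), Ropp_mult_distr_r.
    apply Rpower_cos_le_cos_mult; lra.
Qed.

Lemma cos_pos_bound a : - PI < a < PI -> 0 < cos a -> - (PI / 2) < a < PI / 2.
Proof.
  intros Ha Hc. pose proof PI_RGT_0. split.
  - destruct (Rlt_le_dec (- (PI / 2)) a) as [Hlt|Hle]; [exact Hlt|].
    rewrite <- cos_neg in Hc. pose proof (cos_le_0 (- a)). lra.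
  - destruct (Rlt_le_dec a (PI / 2)) as [Hlt|Hle]; [exact Hlt|].
    pose proof (cos_le_0 a). lra.
Qed.

(* Principal powers of two factors in the right half-plane multiply to a number whose real
   part dominates [Re (z1 z2) ^ g]: the arguments add up inside [(-PI/2, PI/2)]. *)
Lemma Rpower_Re_mult_le g z1 z2 : 0 <= g <= 1 ->
  0 < Re z1 -> 0 < Re z2 -> 0 < Re (Cmult z1 z2) ->
  Rpower (Re (Cmult z1 z2)) g <= Re (Cmult (cpowp z1 g) (cpowp z2 g)).
Proof.
  intros Hg H1 H2 H12.
  pose proof (Cmod_pos_of_Re z1 H1). pose proof (Cmod_pos_of_Re z2 H2).
  set (a := argp z1 + argp z2).
  assert (HRe : Re (Cmult z1 z2) = Cmod z1 * Cmod z2 * cos a).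
  { transitivity (Re (Cmult (Cmult (RtoC (Cmod z1)) (ce (argp z1)))
                            (Cmult (RtoC (Cmod z2)) (ce (argp z2))))).
    - rewrite <- !polar_argp by assumption. reflexivity.
    - unfold a, ce, Re; simpl. rewrite cos_plus. ring. }
  assert (Hcos : 0 < cos a)
    by (rewrite HRe in H12; apply (Rmult_lt_reg_l (Cmod z1 * Cmod z2)); nra).
  assert (Ha : - (PI / 2) < a < PI / 2).
  { apply cos_pos_bound; [|exact Hcos]. pose proof (argp_bound z1). pose proof (argp_bound z2).
    unfold a. lra. }
  rewrite cpowp_mult, HRe, <- Rpower_mult_distr by (try apply Rmult_lt_0_compat; assumption).
  fold a. unfold ce; simpl. rewrite Rmult_0_l, Rminus_0_r.
  apply Rmult_le_compat_l; [left; apply exp_pos|].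
  apply Rpower_cos_le_cos_mult_abs; assumption.
Qed.

Lemma Re_1m_mult_1m3_ge w : Cmod w <= 1 ->
  (1 - Cmod w) * (1 - Cmod w / 3) <= Re (Cmult (Cminus 1 w) (Cminus 1 (Cmult w (RtoC (/ 3))))).
Proof.
  intros Hw. pose proof (Cmod_ge_0 w).
  assert (Hr : Cmod w ^ 2 = Re w ^ 2 + Im w ^ 2) by apply Cmod2_alt.
  assert (Re w <= Cmod w) by (pose proof (re_le_Cmod w); pose proof (Rle_abs (Re w)); lra).
  assert (- Cmod w <= Re w) by (pose proof (re_le_Cmod w); pose proof (Rle_abs (- Re w));
                               rewrite Rabs_Ropp in *; lra).
  destruct w as [a b]. unfold Re, Im in *. simpl in *. nra.
Qed.

Lemma rpow_le_Re_l2gen g w x : 0 <= g <= 1 -> Cmod w < 1 -> Cmod w <= x <= 1 ->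
  rpow ((1 - x) * (3 - x) / 2) g <=
  Re (Cmult (RtoC (rpow (3 / 2) g)) (l2gen g w)).
Proof.
  unfold l2gen. intros Hg Hw Hx. pose proof (Cmod_ge_0 w).
  set (z := Cmult (Cminus 1 w) (Cminus 1 (Cmult w (RtoC (/ 3))))).
  assert (Hz : (1 - Cmod w) * (1 - Cmod w / 3) <= Re z) by (apply Re_1m_mult_1m3_ge; lra).
  assert (Hz0 : 0 < Re z) by nra.
  assert (H1 : 0 < Re (Cminus 1 w)).
  { pose proof (Re_1m_ge w 1 Rle_0_1). rewrite Cmult_1_l in H0. lra. }
  assert (H3 : 0 < Re (Cminus 1 (Cmult w (RtoC (/ 3))))).
  { pose proof (Re_1m_ge w (/ 3) ltac:(lra)). rewrite Cmult_comm in H0. lra. }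
  pose proof (Rpower_Re_mult_le g _ _ Hg H1 H3 Hz0) as HP. fold z in HP.
  assert (Hc : rpow (3 / 2) g = Rpower (3 / 2) g).
  { unfold rpow. destruct (Req_EM_T (3 / 2) 0); [lra|reflexivity]. }
  rewrite Hc, Re_RtoC_mult.
  pose proof (exp_pos (g * ln (3 / 2))). pose proof (exp_pos (g * ln (Re z))).
  unfold rpow. destruct (Req_EM_T ((1 - x) * (3 - x) / 2) 0) as [E0|E0].
  { apply Rmult_le_pos; unfold Rpower in *; lra. }
  assert (HZ : 0 < (1 - x) * (1 - x / 3)) by (destruct Hx; nra).
  replace ((1 - x) * (3 - x) / 2) with (3 / 2 * ((1 - x) * (1 - x / 3))) by field.
  rewrite <- Rpower_mult_distr by lra.
  apply Rmult_le_compat_l; [left; assumption|].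
  eapply Rle_trans; [|exact HP]. apply Rle_Rpower_l; [lra|]. split; [assumption|].
  eapply Rle_trans; [|exact Hz]. apply Rmult_le_compat; lra.
Qed.

(** * Toeplitz forms and their symbols *)

Lemma sum_n_Cpow_root_of_unity (z : C) L :
  Cpow z (S L) = 1 -> z <> 1 -> sum_n (Cpow z) L = RtoC 0.
Proof.
  intros Hz Hz1.
  assert (G : Cmult (Cminus 1 z) (sum_n (Cpow z) L) = Cminus 1 (Cpow z (S L))).
  { clear Hz. induction L as [|L IH]; [rewrite sum_O; simpl; ring|].
    rewrite sum_n_SC, Cmult_plus_distr_l, IH, (Cpow_S z (S L)). ring. }
  rewrite Hz in G. replace (Cminus 1 1) with (RtoC 0) in G by ring.
  assert (Hne : Cminus 1 z <> 0) by (apply Cminus_eq_contra; auto).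
  assert (Hcancel : forall S : C, Cmult (Cminus 1 z) S = RtoC 0 -> S = RtoC 0).
  { intros S HS.
    rewrite <- (Cmult_1_l S), <- (Cinv_l (Cminus 1 z)), <- Cmult_assoc, HS by exact Hne.
    apply Cmult_0_r. }
  apply Hcancel, G.
Qed.

Lemma ce_neq_1 phi : - (2 * PI) < phi < 2 * PI -> phi <> 0 -> ce phi <> 1.
Proof.
  intros Hp Hn E. unfold ce in E. injection E as E1 E2.
  pose proof PI_RGT_0.
  replace phi with (2 * (phi / 2)) in E1 by field.
  rewrite cos_2a_sin in E1.
  assert (sin (phi / 2) = 0) by nra.
  destruct (Rlt_le_dec 0 phi).
  - assert (0 < sin (phi / 2)) by (apply sin_gt_0; lra). lra.
  - assert (sin (phi / 2) < 0) by (apply sin_lt_0_var; lra). lra.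
Qed.

Definition dft_node (M j : nat) : R := 2 * PI * INR j / INR M.

Lemma sum_dft_nodes_ce (L p n : nat) : (p <= L)%nat -> (n <= L)%nat ->
  sum_n (fun j => Cmult (ce (INR p * dft_node (S L) j)) (Cconj (ce (INR n * dft_node (S L) j)))) L
  = if Nat.eqb p n then RtoC (INR (S L)) else RtoC 0.
Proof.
  intros Hp Hn. pose proof PI_RGT_0.
  assert (HM : 0 < INR (S L)) by (apply lt_0_INR; lia).
  set (phi := 2 * PI * (INR p - INR n) / INR (S L)).
  rewrite (sum_n_ext _ (Cpow (ce phi))).
  2: { intros j. rewrite Cconj_ce, <- ce_add, Cpow_ce. f_equal. unfold phi, dft_node. field. lra. }
  destruct (Nat.eqb_spec p n) as [<-|Hpn].
  - unfold phi. replace (2 * PI * (INR p - INR p) / INR (S L)) with 0 by (field; lra).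
    rewrite ce_0, (sum_n_ext _ (fun _ => RtoC 1)) by (intros; apply Cpow_1_l).
    rewrite <- sum_n_RtoC, sum_n_const. f_equal. ring.
  - apply sum_n_Cpow_root_of_unity.
    + rewrite Cpow_ce. unfold phi.
      replace (INR (S L) * (2 * PI * (INR p - INR n) / INR (S L)))
        with (2 * PI * INR p + - (2 * PI * INR n)) by (field; lra).
      rewrite ce_add, <- Cconj_ce, !ce_2PI_INR. apply injective_projections; simpl; ring.
    + assert (INR p <= INR L) by (apply le_INR; auto).
      assert (INR n <= INR L) by (apply le_INR; auto).
      assert (INR p <> INR n) by (intros E; apply Hpn, INR_eq, E).
      pose proof (pos_INR p). pose proof (pos_INR n). rewrite S_INR in *.
      set (q := (INR p - INR n) / (INR L + 1)).
      assert (Hq : INR p - INR n = q * (INR L + 1)) by (unfold q; field; lra).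
      assert (Hphi : phi = 2 * PI * q) by (unfold phi, q; rewrite S_INR; field; lra).
      assert (-1 < q < 1) by (split; nra).
      assert (q <> 0) by (intros E; rewrite E in Hq; lra).
      apply ce_neq_1; rewrite Hphi; [split; nra|].
      intros E. apply Rmult_integral in E as [E|E]; lra.
Qed.

Definition toeplitz_form (c v : nat -> C) N : C :=
  sum_n (fun n => Cmult (sum_n (fun k => Cmult (c k) (v (n - k)%nat)) n) (Cconj (v n))) N.

Lemma toeplitz_form_ext c d v N :
  (forall k, c k = d k) -> toeplitz_form c v N = toeplitz_form d v N.
Proof.
  intros H. unfold toeplitz_form. apply sum_n_ext => n. f_equal.
  apply sum_n_ext => k. rewrite H. reflexivity.
Qed.

Definition symbol (c : nat -> C) K (th : R) : C := sum_n (fun k => Cmult (c k) (ce (INR k * th))) K.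

Definition trig_poly (v : nat -> C) N (th : R) : C :=
  sum_n (fun m => Cmult (v m) (ce (INR m * th))) N.

Lemma symbol_mult_Cmod2_trig_poly c v N K th :
  Cmult (symbol c K th) (Cmult (trig_poly v N th) (Cconj (trig_poly v N th))) =
  sum_n (fun k => sum_n (fun m => sum_n (fun n =>
     Cmult (Cmult (Cmult (c k) (v m)) (Cconj (v n)))
           (Cmult (ce (INR (k + m) * th)) (Cconj (ce (INR n * th))))) N) N) K.
Proof.
  unfold symbol, trig_poly. rewrite sum_n_Cconj, <- sum_n_Cmult_r. apply sum_n_ext => k.
  rewrite <- sum_n_Cmult_r, <- sum_n_Cmult_l. apply sum_n_ext => m.
  rewrite <- !sum_n_Cmult_l. apply sum_n_ext => n.
  rewrite plus_INR, Rmult_plus_distr_r, ce_add, Cmult_conj. C_ring.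
Qed.

(* Averaging the symbol against [|trig_poly v|^2] over [K + N + 1] equispaced nodes recovers the
   Toeplitz form exactly, because no frequency [k + m - n] of modulus up to [K + N] aliases to 0. *)
Lemma sum_dft_symbol_Cmod2 c v N K : (N <= K)%nat ->
  let th j := dft_node (S (K + N)) j in
  sum_n (fun j => Cmult (symbol c K (th j))
     (Cmult (trig_poly v N (th j)) (Cconj (trig_poly v N (th j))))) (K + N)
  = Cmult (RtoC (INR (S (K + N)))) (toeplitz_form c v N).
Proof.
  intros HNK th. set (L := (K + N)%nat). set (M := RtoC (INR (S L))).
  rewrite (sum_n_ext _ _ L (fun j => symbol_mult_Cmod2_trig_poly c v N K (th j))).
  rewrite sum_n_switch.
  rewrite (sum_n_ext_loc _ (fun k => sum_n (fun n => sum_n (fun m =>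
      Cmult (Cmult (Cmult (c k) (v m)) (Cconj (v n))) (if Nat.eqb (k + m) n then M else RtoC 0))
      N) N) K).
  2: { intros k Hk. rewrite sum_n_switch. symmetry. rewrite sum_n_switch. symmetry.
       apply sum_n_ext_loc. intros m Hm.
       rewrite sum_n_switch. apply sum_n_ext_loc. intros n Hn.
       unfold th. rewrite sum_n_Cmult_l, sum_dft_nodes_ce by (unfold L; lia). reflexivity. }
  rewrite sum_n_switch. unfold toeplitz_form. rewrite <- sum_n_Cmult_l.
  apply sum_n_ext_loc. intros n Hn.
  rewrite (sum_n_ext_loc _ (fun k => if Nat.leb k n then
      Cmult M (Cmult (Cmult (c k) (v (n - k)%nat)) (Cconj (v n))) else RtoC 0) K).
  - rewrite sum_n_truncate by lia. rewrite <- sum_n_Cmult_r, <- sum_n_Cmult_l.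
    apply sum_n_ext => k. C_ring.
  - intros k Hk. destruct (Nat.leb_spec k n).
    + rewrite (sum_n_ext _ (fun m => if Nat.eqb m (n - k) then
          Cmult M (Cmult (Cmult (c k) (v m)) (Cconj (v n))) else RtoC 0)).
      * rewrite sum_n_delta. destruct (Nat.leb_spec (n - k) N); [reflexivity|lia].
      * intros m. destruct (Nat.eqb_spec (k + m) n), (Nat.eqb_spec m (n - k)); try lia.
        -- C_ring.
        -- apply Cmult_0_r.
    + apply sum_n_zero_loc. intros m Hm. destruct (Nat.eqb_spec (k + m) n); [lia|].
      apply Cmult_0_r.
Qed.

Definition unit_seq (k : nat) : C := if Nat.eqb k 0 then RtoC 1 else RtoC 0.

Lemma symbol_unit_seq K th : symbol unit_seq K th = 1.
Proof.
  unfold symbol. induction K as [|K IH].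
  - rewrite sum_O. unfold unit_seq. simpl. rewrite Rmult_0_l, ce_0. ring.
  - rewrite sum_n_SC, IH. unfold unit_seq. simpl. ring.
Qed.

Lemma Re_toeplitz_form_unit_seq_ge0 v N : 0 <= Re (toeplitz_form unit_seq v N).
Proof.
  unfold toeplitz_form. rewrite Re_sum_n. apply sum_n_nonneg_loc. intros n _.
  rewrite (sum_n_ext _ (fun k => if Nat.eqb k 0 then v (n - k)%nat else RtoC 0)).
  - rewrite sum_n_delta, Nat.sub_0_r. simpl. destruct (v n) as [x y]. unfold Re; simpl. nra.
  - intros k. unfold unit_seq. destruct (Nat.eqb_spec k 0); C_ring.
Qed.

Lemma Re_mult_Cmod2 (s z : C) : Re (Cmult s (Cmult z (Cconj z))) = Re s * (Re z ^ 2 + Im z ^ 2).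
Proof. destruct s, z; unfold Re, Im; simpl; ring. Qed.

Lemma Re_toeplitz_form_ge c v N K eps : (N <= K)%nat ->
  (forall th, - eps <= Re (symbol c K th)) ->
  - eps * Re (toeplitz_form unit_seq v N) <= Re (toeplitz_form c v N).
Proof.
  intros HNK Hsym.
  assert (HM : 0 < INR (S (K + N))) by (apply lt_0_INR; lia).
  pose proof (f_equal Re (sum_dft_symbol_Cmod2 c v N K HNK)) as Ec.
  pose proof (f_equal Re (sum_dft_symbol_Cmod2 unit_seq v N K HNK)) as E1.
  rewrite Re_sum_n, Re_RtoC_mult in Ec, E1.
  apply Rmult_le_reg_l with (INR (S (K + N))); [exact HM|].
  replace (INR (S (K + N)) * (- eps * Re (toeplitz_form unit_seq v N)))
    with (- eps * (INR (S (K + N)) * Re (toeplitz_form unit_seq v N))) by ring.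
  rewrite <- Ec, <- E1, <- sum_n_Rmult_l.
  apply sum_n_le_loc. intros j _.
  rewrite !Re_mult_Cmod2, symbol_unit_seq.
  pose proof (Hsym (dft_node (S (K + N)) j)).
  set (V := trig_poly v N _). assert (0 <= Re V ^ 2 + Im V ^ 2) by nra.
  simpl Re at 1. nra.
Qed.

(* [l2seq g s phi C0 k] is the paper's [l_k^(2) e^(-J eta u k tau)] for
   [s = e^(-(lam + rho u) tau)], [phi = eta u tau] and [C0] the constant subtracted from
   [l_0^(2,g)]. *)
Definition l2seq g s phi C0 (k : nat) : C :=
  if Nat.eqb k 0 then RtoC (l2coef g 0 - C0)
  else Cmult (RtoC (s ^ k * l2coef g k)) (ce (- (INR k * phi))).

Lemma symbol_l2seq g s phi C0 K th :
  symbol (l2seq g s phi C0) K th =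
  Cminus (Cmult (RtoC (rpow (3 / 2) g)) (l2psum g (Cmult (RtoC s) (ce (th - phi))) K)) (RtoC C0).
Proof.
  set (w := Cmult (RtoC s) (ce (th - phi))).
  unfold symbol, l2psum. rewrite <- sum_n_Cmult_l.
  transitivity (sum_n (fun k => Cminus (Cmult (RtoC (l2coef g k)) (Cpow w k))
                                        (if Nat.eqb k 0 then RtoC C0 else RtoC 0)) K).
  - apply sum_n_ext => k. unfold l2seq. destruct k as [|k]; cbn [Nat.eqb].
    + simpl INR. rewrite Rmult_0_l, ce_0, RtoC_minus. simpl. C_ring.
    + unfold w. rewrite Cpow_mult_l, Cpow_ce, <- RtoC_pow, RtoC_mult.
      replace (INR (S k) * (th - phi)) with (- (INR (S k) * phi) + INR (S k) * th) by ring.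
      rewrite ce_add. C_ring.
  - rewrite sum_n_Cminus, sum_n_delta. f_equal.
    apply sum_n_ext => k. unfold l2coef. rewrite RtoC_mult. C_ring.
Qed.

Lemma Re_symbol_l2seq_ge g s phi C0 x : 0 <= g <= 1 -> 0 <= s < 1 -> s <= x <= 1 ->
  C0 <= rpow ((1 - x) * (3 - x) / 2) g ->
  exists B, 0 <= B /\ forall K th,
    - (B * (INR (S K) ^ 2 * s ^ S K)) <= Re (symbol (l2seq g s phi C0) K th).
Proof.
  intros Hg Hs Hx HC0.
  destruct (Cmod_l2psum_sub_l2gen g s Hg Hs) as [B [HB Herr]].
  set (cg := rpow (3 / 2) g).
  assert (Hcg : 0 < cg).
  { unfold cg, rpow. destruct (Req_EM_T (3 / 2) 0); [lra|apply exp_pos]. }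
  exists (cg * B). split; [nra|]. intros K th.
  set (w := Cmult (RtoC s) (ce (th - phi))).
  assert (Hw : Cmod w = s) by (unfold w; rewrite Cmod_mult, Cmod_ce, Cmod_R, Rabs_right; lra).
  pose proof (rpow_le_Re_l2gen g w x Hg ltac:(lra) ltac:(lra)) as Hlow. fold cg in Hlow.
  specialize (Herr w K ltac:(lra)).
  set (P := l2gen g w) in *.
  set (e := Cminus (l2psum g w K) P) in Herr.
  rewrite Re_RtoC_mult in Hlow.
  pose proof (re_le_Cmod e). pose proof (Rle_abs (- Re e)). rewrite Rabs_Ropp in *.
  assert (cg * Cmod e <= cg * (B * (INR (S K) ^ 2 * s ^ S K))) by (apply Rmult_le_compat_l; lra).
  rewrite symbol_l2seq. fold cg w.
  replace (l2psum g w K) with (Cplus P e) by (unfold e; ring).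
  clearbody P e. destruct P as [p1 p2], e as [e1 e2]. unfold Re in *. simpl in *. nra.
Qed.

Lemma INR_mult_pow_le q n : 0 <= q < 1 -> INR n * q ^ n <= / (1 - q).
Proof.
  intros Hq.
  assert (H : q ^ n * (INR n * (1 - q) + 1) <= 1).
  { induction n as [|n IH]; [simpl; lra|].
    rewrite S_INR. simpl.
    pose proof (pow_le q n (proj1 Hq)).
    assert (q ^ n <= 1) by (rewrite <- (pow1 n); apply pow_incr; lra).
    replace (q * q ^ n * ((INR n + 1) * (1 - q) + 1))
      with (q * (q ^ n * (INR n * (1 - q) + 1)) + q * q ^ n * (1 - q)) by ring.
    assert (q * (q ^ n * (INR n * (1 - q) + 1)) <= q * 1) by (apply Rmult_le_compat_l; lra).
    assert (q * q ^ n <= 1) by nra.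
    assert (q * q ^ n * (1 - q) <= 1 * (1 - q)) by (apply Rmult_le_compat_r; lra).
    lra. }
  pose proof (pow_le q n (proj1 Hq)).
  apply Rmult_le_reg_r with (1 - q); [lra|]. rewrite Rinv_l by lra. nra.
Qed.

(* Writing [y = t ^ 4]: [n ^ 2 y ^ n = (n t ^ n) ^ 2 (t ^ 2) ^ n], a bounded factor times a
   geometric one. *)
Lemma INR_sq_mult_pow_small y d N : 0 <= y < 1 -> 0 < d ->
  exists K, (N <= K)%nat /\ INR (S K) ^ 2 * y ^ S K < d.
Proof.
  intros Hy Hd.
  set (t := sqrt (sqrt y)).
  assert (Ht0 : 0 <= t) by apply sqrt_pos.
  assert (Htt : t * t = sqrt y) by (apply sqrt_sqrt, sqrt_pos).
  assert (Hyy : sqrt y * sqrt y = y) by (apply sqrt_sqrt; lra).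
  assert (Ht1 : t < 1).
  { destruct (Rlt_le_dec t 1) as [H|H]; [exact H|].
    assert (1 <= sqrt y) by nra. nra. }
  assert (Hd' : 0 < d * ((1 - t) * (1 - t))) by (apply Rmult_lt_0_compat; nra).
  destruct (pow_lt_1_zero (t * t) ltac:(rewrite Rabs_right; nra) _ Hd') as [N0 HN0].
  exists (Nat.max N N0). split; [lia|].
  set (n := S (Nat.max N N0)).
  assert (H1 : Rabs ((t * t) ^ n) < d * ((1 - t) * (1 - t))) by (apply HN0; unfold n; lia).
  rewrite Rabs_right in H1 by (apply Rle_ge, pow_le; nra).
  pose proof (INR_mult_pow_le t n (conj Ht0 Ht1)) as H2.
  replace (INR n ^ 2 * y ^ n) with ((INR n * t ^ n) * (INR n * t ^ n) * (t * t) ^ n)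
    by (rewrite <- Hyy, <- Htt, !Rpow_mult_distr; ring).
  pose proof (pos_INR n). pose proof (pow_le t n Ht0).
  assert (0 <= INR n * t ^ n) by nra.
  assert (0 <= (t * t) ^ n) by (apply pow_le; nra).
  assert (Hi : 0 < / (1 - t)) by (apply Rinv_0_lt_compat; lra).
  apply Rle_lt_trans with (/ (1 - t) * / (1 - t) * (t * t) ^ n).
  - apply Rmult_le_compat_r; [assumption|]. apply Rmult_le_compat; assumption.
  - replace d with (/ (1 - t) * / (1 - t) * (d * ((1 - t) * (1 - t)))) by (field; lra).
    apply Rmult_lt_compat_l; nra.
Qed.

Lemma Rle_0_of_lower_bounds F D (e : nat -> R) N : 0 <= D ->
  (forall K, (N <= K)%nat -> - (e K * D) <= F) ->
  (forall d, 0 < d -> exists K, (N <= K)%nat /\ e K < d) -> 0 <= F.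
Proof.
  intros HD Hlow Hsmall.
  destruct (Rle_lt_dec 0 F) as [HF|HF]; [exact HF|exfalso].
  destruct HD as [HD|HD].
  - destruct (Hsmall (- F / D) ltac:(apply Rdiv_lt_0_compat; lra)) as [K [HK He]].
    pose proof (Hlow K HK).
    assert (e K * D < - F / D * D) by (apply Rmult_lt_compat_r; assumption).
    replace (- F / D * D) with (- F) in * by (field; lra). lra.
  - pose proof (Hlow N (le_n N)). rewrite <- HD in *. lra.
Qed.

Lemma Re_toeplitz_l2seq_ge0 g s phi C0 x v N : 0 <= g <= 1 -> 0 <= s < 1 -> s <= x <= 1 ->
  C0 <= rpow ((1 - x) * (3 - x) / 2) g ->
  0 <= Re (toeplitz_form (l2seq g s phi C0) v N).
Proof.
  intros Hg Hs Hx HC0.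
  destruct (Re_symbol_l2seq_ge g s phi C0 x Hg Hs Hx HC0) as [B [HB Hsym]].
  apply (Rle_0_of_lower_bounds _ (Re (toeplitz_form unit_seq v N))
           (fun K => B * (INR (S K) ^ 2 * s ^ S K)) N).
  - apply Re_toeplitz_form_unit_seq_ge0.
  - intros K HK. rewrite Ropp_mult_distr_l. apply (Re_toeplitz_form_ge _ v N K); auto.
  - intros d Hd. destruct (Req_dec B 0) as [->|HB0].
    + exists N. split; [lia|]. lra.
    + destruct (INR_sq_mult_pow_small s (d / B) N Hs) as [K [HK HKd]];
        [apply Rdiv_lt_0_compat; lra|].
      exists K. split; [exact HK|].
      apply (Rmult_lt_compat_l B) in HKd; [|lra].
      replace (B * (d / B)) with d in HKd by (field; lra). exact HKd.
Qed.

Lemma Re_toeplitz_form_sub_le c d v N :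
  Re (toeplitz_form d v N) - Re (toeplitz_form c v N) <=
  sum_n (fun n => sum_n (fun k =>
    Cmod (Cminus (c k) (d k)) * Cmod (v (n - k)%nat) * Cmod (v n)) n) N.
Proof.
  assert (E : Cminus (toeplitz_form c v N) (toeplitz_form d v N) =
     sum_n (fun n => sum_n (fun k =>
       Cmult (Cmult (Cminus (c k) (d k)) (v (n - k)%nat)) (Cconj (v n))) n) N).
  { unfold toeplitz_form. rewrite <- sum_n_Cminus. apply sum_n_ext => n.
    rewrite <- !sum_n_Cmult_r, <- sum_n_Cminus. apply sum_n_ext => k. C_ring. }
  replace (Re (toeplitz_form d v N) - Re (toeplitz_form c v N))
    with (- Re (Cminus (toeplitz_form c v N) (toeplitz_form d v N)))
    by (unfold Re; destruct (toeplitz_form c v N), (toeplitz_form d v N); simpl; ring).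
  eapply Rle_trans;
    [apply Rle_trans with (Rabs (- Re (Cminus (toeplitz_form c v N) (toeplitz_form d v N))));
    [apply Rle_abs|rewrite Rabs_Ropp; apply re_le_Cmod]|].
  rewrite E. eapply Rle_trans; [apply Cmod_sum_n|]. apply sum_n_le_loc. intros n _.
  eapply Rle_trans; [apply Cmod_sum_n|]. apply sum_n_le_loc. intros k _.
  rewrite !Cmod_mult, Cmod_conj. lra.
Qed.

Lemma one_sub_pow_le s k : 0 <= s <= 1 -> 1 - s ^ k <= INR k * (1 - s).
Proof.
  intros Hs. induction k as [|k IH]; [simpl; lra|].
  rewrite S_INR. simpl.
  assert (s ^ k <= 1) by (rewrite <- (pow1 k); apply pow_incr; lra).
  pose proof (pow_le s k (proj1 Hs)). nra.
Qed.

Lemma Cmod_l2seq_sub_le g s phi k : 0 <= s <= 1 ->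
  Cmod (Cminus (l2seq g 1 phi 0 k) (l2seq g s phi 0 k)) <= (1 - s) * (INR k * Rabs (l2coef g k)).
Proof.
  intros Hs. unfold l2seq. destruct (Nat.eqb_spec k 0) as [->|Hk].
  - replace (Cminus _ _) with (RtoC 0) by ring. rewrite Cmod_0. simpl. lra.
  - replace (Cminus _ _) with (Cmult (RtoC ((1 - s ^ k) * l2coef g k)) (ce (- (INR k * phi))))
      by (rewrite pow1, !RtoC_mult, RtoC_minus; ring).
    rewrite Cmod_mult, Cmod_ce, Cmod_R, Rabs_mult, Rmult_1_r.
    pose proof (one_sub_pow_le s k Hs).
    assert (s ^ k <= 1) by (rewrite <- (pow1 k); apply pow_incr; lra).
    rewrite Rabs_right by lra. pose proof (Rabs_pos (l2coef g k)).
    replace ((1 - s) * (INR k * Rabs (l2coef g k)))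
      with (INR k * (1 - s) * Rabs (l2coef g k)) by ring.
    apply Rmult_le_compat_r; lra.
Qed.

Lemma Rle_0_of_ge_opp_mult F B : (forall e, 0 < e < 1 -> - (e * B) <= F) -> 0 <= F.
Proof.
  intros H. destruct (Rle_lt_dec 0 F) as [HF|HF]; [exact HF|exfalso].
  set (e := Rmin (1 / 2) (- F / (2 * (Rabs B + 1)))).
  assert (He : 0 < e).
  { apply Rmin_glb_lt; [lra|]. apply Rdiv_lt_0_compat; pose proof (Rabs_pos B); lra. }
  assert (He1 : e <= - F / (2 * (Rabs B + 1))) by apply Rmin_r.
  assert (He2 : e <= 1 / 2) by apply Rmin_l.
  pose proof (H e ltac:(lra)).
  pose proof (Rle_abs B). pose proof (Rabs_pos B).
  assert (e * Rabs B <= - F / (2 * (Rabs B + 1)) * Rabs B) by (apply Rmult_le_compat_r; lra).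
  assert (- F / (2 * (Rabs B + 1)) * Rabs B < - F).
  { apply Rmult_lt_reg_r with (2 * (Rabs B + 1)); [lra|].
    replace (- F / (2 * (Rabs B + 1)) * Rabs B * (2 * (Rabs B + 1))) with (- F * Rabs B)
      by (field; lra).
    nra. }
  nra.
Qed.

(* At [s = 1] the truncated symbols no longer converge geometrically; instead the form is
   Lipschitz in [s], so the case [s < 1] passes to the limit. *)
Lemma Re_toeplitz_l2seq_1_ge0 g phi v N : 0 <= g <= 1 ->
  0 <= Re (toeplitz_form (l2seq g 1 phi 0) v N).
Proof.
  intros Hg.
  apply (Rle_0_of_ge_opp_mult _ (sum_n (fun n => sum_n (fun k =>
    INR k * Rabs (l2coef g k) * Cmod (v (n - k)%nat) * Cmod (v n)) n) N)).
  intros e He.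
  assert (Hs : 0 <= Re (toeplitz_form (l2seq g (1 - e) phi 0) v N)).
  { apply (Re_toeplitz_l2seq_ge0 g (1 - e) phi 0 1); try lra.
    unfold rpow. destruct (Req_EM_T ((1 - 1) * (3 - 1) / 2) 0); [lra|left; apply exp_pos]. }
  pose proof (Re_toeplitz_form_sub_le (l2seq g 1 phi 0) (l2seq g (1 - e) phi 0) v N) as Hd.
  enough (sum_n (fun n => sum_n (fun k =>
            Cmod (Cminus (l2seq g 1 phi 0 k) (l2seq g (1 - e) phi 0 k))
            * Cmod (v (n - k)%nat) * Cmod (v n)) n) N <=
          e * sum_n (fun n => sum_n (fun k =>
            INR k * Rabs (l2coef g k) * Cmod (v (n - k)%nat) * Cmod (v n)) n) N) by lra.
  rewrite <- sum_n_Rmult_l. apply sum_n_le_loc. intros n _.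
  rewrite <- sum_n_Rmult_l. apply sum_n_le_loc. intros k _.
  pose proof (Cmod_l2seq_sub_le g (1 - e) phi k ltac:(lra)) as Hk.
  replace (1 - (1 - e)) with e in Hk by ring.
  pose proof (Cmod_ge_0 (v (n - k)%nat)). pose proof (Cmod_ge_0 (v n)).
  replace (e * (INR k * Rabs (l2coef g k) * Cmod (v (n - k)%nat) * Cmod (v n)))
    with (e * (INR k * Rabs (l2coef g k)) * Cmod (v (n - k)%nat) * Cmod (v n)) by ring.
  apply Rmult_le_compat_r; [assumption|]. apply Rmult_le_compat_r; assumption.
Qed.

Lemma exp_INR_mult a n : exp (INR n * a) = exp a ^ n.
Proof.
  induction n as [|n IH]; [simpl; rewrite Rmult_0_l; apply exp_0|].
  rewrite S_INR, Rmult_plus_distr_r, Rmult_1_l, exp_plus, IH. simpl. ring.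
Qed.

Lemma l2mod_cexpmJ g lam tau eta rho u k :
  Cmult (RtoC (l2mod g lam tau rho u k)) (cexpmJ (eta * u * INR k * tau)) =
  l2seq g (exp (- (lam + rho * u) * tau)) (eta * u * tau)
        (rpow ((1 - exp (- lam * tau)) * (3 - exp (- lam * tau)) / 2) g) k.
Proof.
  unfold l2seq, cexpmJ. destruct k as [|k]; cbn [Nat.eqb].
  - unfold l2mod. simpl INR. rewrite !Rmult_0_r, Rmult_0_l, cos_0, sin_0.
    replace ((1 - exp (- lam * tau)) * (3 - exp (- lam * tau)) / 2)
      with (sum_f_R0 (fun i => / INR (S i) * (1 - exp (- lam * tau)) ^ S i) 1) by (simpl; field).
    apply injective_projections; simpl; ring.
  - unfold l2mod, ce. rewrite <- exp_INR_mult, cos_neg, sin_neg.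
    replace (INR (S k) * (- (lam + rho * u) * tau))
      with (- (lam + rho * u) * INR (S k) * tau) by ring.
    replace (INR (S k) * (eta * u * tau)) with (eta * u * INR (S k) * tau) by ring.
    reflexivity.
Qed.

Theorem lemma3p7 (gamma lam tau eta rho u : R)
  (hg0 : 0 < gamma) (hg1 : gamma < 1) (hlam : 0 <= lam) (htau : 0 < tau)
  (hru : 0 <= rho * u) :
  forall (N : nat), (1 <= N)%nat -> forall v : nat -> C,
  0 <= Re (sum_n (fun n =>
        Cmult (sum_n (fun k =>
                 Cmult (Cmult (RtoC (l2mod gamma lam tau rho u k))
                              (cexpmJ (eta * u * INR k * tau)))
                       (v (n - k)%nat)) n)
              (Cconj (v n))) N).
Proof.
  (* The bound holds for every [N]. *)
  intros N _ v.
  set (x := exp (- lam * tau)). set (y := exp (- (lam + rho * u) * tau)).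
  set (C0 := rpow ((1 - x) * (3 - x) / 2) gamma).
  change (0 <= Re (toeplitz_form (fun k => Cmult (RtoC (l2mod gamma lam tau rho u k))
                                                 (cexpmJ (eta * u * INR k * tau))) v N)).
  rewrite (toeplitz_form_ext _ (l2seq gamma y (eta * u * tau) C0)) by apply l2mod_cexpmJ.
  assert (Hx1 : x <= 1) by (unfold x; rewrite <- exp_0; apply exp_le_compat; nra).
  assert (Hyx : y <= x) by (unfold x, y; apply exp_le_compat; nra).
  assert (Hy0 : 0 < y) by apply exp_pos.
  destruct (Rlt_le_dec y 1) as [Hy1|Hy1].
  - apply (Re_toeplitz_l2seq_ge0 gamma y _ C0 x); unfold C0; lra.
  - assert (Hx : x = 1) by lra. assert (Hy : y = 1) by lra.
    assert (HC0 : C0 = 0).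
    { unfold C0, rpow. rewrite Hx.
      destruct (Req_EM_T ((1 - 1) * (3 - 1) / 2) 0); [reflexivity|lra]. }
    rewrite Hy, HC0. apply Re_toeplitz_l2seq_1_ge0. lra.
Qed.
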